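(* Let $0<q<1$, $\sigma,w\in\mathbb{C}$ with $w\ne0$ and $q^\sigma\notin q^{\mathbb{Z}}$ (complex powers of $w$ taken with one fixed branch of $\log w$). Then \[ \lim_{\substack{|\nu|\to\infty\\ \nu\in-\sigma-\mathbb{N}}}\sin(\pi\nu)\,q^{\nu(\nu+1)/4}\,w^{-\nu}\,\mathfrak{j}_\nu(2w;q) =-\sin(\pi\sigma)\,q^{-\sigma(1-\sigma)/2}\,\frac{(q^\sigma;q)_\infty(q^{1-\sigma};q)_\infty(-q^{1/2}w^2;q)_\infty}{(q;q)_\infty}. \]
   Context: Complex powers of $q$ are $q^s=e^{s\log q}$. $(a;q)_k=\prod_{j=0}^{k-1}(1-aq^j)$, $(a;q)_\infty=\lim_k(a;q)_k$, ${}_0\phi_1(;b;q,z)=\sum_{k\ge0}\frac{q^{k(k-1)}}{(q;q)_k(b;q)_k}z^k$, and \[ \mathfrak{j}_\nu(x;q)=q^{\nu(\nu+1)/4}\frac{(q^{\nu+1};q)_\infty}{(q;q)_\infty}\left(\frac{x}{2}\right)^{\nu}{}_0\phi_1\!\left(;q^{\nu+1};q,-q^{\nu+3/2}\frac{x^2}{4}\right). \] The limit is taken along $\nu=-\sigma-n$, $n\in\mathbb{N}$, $n\to\infty$. *)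

From Stdlib Require Import Reals ZArith.
From Coquelicot Require Import Coquelicot.
Open Scope R_scope.

(* Limit of a complex sequence, computed componentwise (meaningful when it converges). *)
Definition cLim (u : nat -> C) : C :=
  (real (Lim_seq (fun n => Re (u n))), real (Lim_seq (fun n => Im (u n)))).

Definition cSeries (a : nat -> C) : C := cLim (fun N => sum_n a N).

Definition cexp (z : C) : C :=
  cSeries (fun n => Cmult (RtoC (/ INR (fact n))) (Cpow z n)).

Definition csin (z : C) : C :=
  Cdiv (Cminus (cexp (Cmult Ci z)) (cexp (Copp (Cmult Ci z)))) (Cmult (RtoC 2) Ci).

Definition qpow (q : R) (s : C) : C := cexp (Cmult s (RtoC (ln q))).

Fixpoint qpoch (a : C) (q : R) (k : nat) : C :=
  match k with
  | O => RtoC 1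
  | S k' => Cmult (qpoch a q k') (Cminus (RtoC 1) (Cmult a (RtoC (q ^ k'))))
  end.

Definition qpoch_inf (a : C) (q : R) : C := cLim (fun k => qpoch a q k).

Definition phi01 (b : C) (q : R) (z : C) : C :=
  cSeries (fun k => Cmult (Cdiv (RtoC (q ^ (k * (k - 1))))
                                (Cmult (qpoch (RtoC q) q k) (qpoch b q k)))
                          (Cpow z k)).

(* Jackson-type q-Bessel function j_nu(x;q); the power (x/2)^nu is
   e^{nu * lx} where lx is a chosen logarithm of x/2. *)
Definition jfrak (nu x lx : C) (q : R) : C :=
  Cmult (Cmult (Cmult (qpow q (Cdiv (Cmult nu (Cplus nu (RtoC 1))) (RtoC 4)))
                      (Cdiv (qpoch_inf (qpow q (Cplus nu (RtoC 1))) q)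
                            (qpoch_inf (RtoC q) q)))
               (cexp (Cmult nu lx)))
        (phi01 (qpow q (Cplus nu (RtoC 1))) q
               (Cmult (Copp (qpow q (Cplus nu (RtoC (3/2)))))
                      (Cdiv (Cmult x x) (RtoC 4)))).

From Pilot Require Import Defs.
From Stdlib Require Import Reals ZArith Lra Lia.
From Coquelicot Require Import Coquelicot.
Open Scope R_scope.

(* With [nu = -sigma - n], the factor [e^(-nu L)] cancels the power [(x/2)^nu = e^(nu L)] inside
   [jfrak], and [sin(pi nu) = (-1)^(n+1) sin(pi sigma)].  What remains is
   [-sin(pi sigma) / (q;q)_oo] times [sum_k t(n,k)], where [t(n,k)] is
   [(-1)^n q^(nu(nu+1)/2) (q^(nu+1);q)_oo] times the [k]-th term of the [0phi1] series.
   For [k <= n], reversing the first [n - k] factors of [(q^(nu+1+k);q)_oo] gives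
     [t(n,k) = q^(-sigma(1-sigma)/2) (q^(1-sigma);q)_oo (q^sigma;q)_(n-k) q^(k^2/2) w^(2k) / (q;q)_k],
   whose limit in [n] is a term of Euler's series for [(-q^(1/2) w^2;q)_oo] times [(q^sigma;q)_oo].
   Completing the square in the exponent of [q] bounds [t(n,k)] by a summable majorant uniformly
   in [n], so Tannery's theorem exchanges limit and sum.  The hypothesis on [q^sigma] only ensures
   that no factor of [(q^(nu+1);q)_k] vanishes.
   The complex exponential of [Defs] is identified with [e^(Re z) (cos (Im z) + i sin (Im z))] by
   showing that its power series times [e^(-t z)] has zero derivative in [t]. *)

Definition is_lim_Cseq (u : nat -> C) (l : C) := filterlim u eventually (locally l).

Lemma is_lim_Cseq_spec (u : nat -> C) (l : C) :
  is_lim_Cseq u l <->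
  is_lim_seq (fun n => Re (u n)) (Re l) /\ is_lim_seq (fun n => Im (u n)) (Im l).
Proof.
  rewrite <- !is_lim_seq_spec. split.
  - intros H; split; intros eps.
    + destruct (H (fun z : C => Rabs (Re z - Re l) < eps)) as [N HN];
        [exists eps; intros y [Hy _]; exact Hy | exists N; exact HN].
    + destruct (H (fun z : C => Rabs (Im z - Im l) < eps)) as [N HN];
        [exists eps; intros y [_ Hy]; exact Hy | exists N; exact HN].
  - intros [H1 H2] P [eps HP].
    destruct (H1 eps) as [N1 HN1], (H2 eps) as [N2 HN2].
    exists (max N1 N2); intros n Hn; apply HP; split; [apply HN1 | apply HN2]; lia.
Qed.

Lemma cLim_correct u l : is_lim_Cseq u l -> cLim u = l.
Proof.
  intros [H1 H2]%is_lim_Cseq_spec. unfold cLim.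
  rewrite (is_lim_seq_unique _ _ H1), (is_lim_seq_unique _ _ H2). now destruct l.
Qed.

Lemma is_lim_Cseq_unique u l1 l2 : is_lim_Cseq u l1 -> is_lim_Cseq u l2 -> l1 = l2.
Proof. intros H1 H2. now rewrite <- (cLim_correct _ _ H1), (cLim_correct _ _ H2). Qed.

Lemma is_lim_Cseq_ext u v l : (forall n, u n = v n) -> is_lim_Cseq u l -> is_lim_Cseq v l.
Proof. apply filterlim_ext. Qed.

Lemma is_lim_Cseq_const c : is_lim_Cseq (fun _ => c) c.
Proof. apply filterlim_const. Qed.

Lemma is_lim_Cseq_plus u v a b :
  is_lim_Cseq u a -> is_lim_Cseq v b -> is_lim_Cseq (fun n => Cplus (u n) (v n)) (Cplus a b).
Proof.
  intros Hu Hv. eapply filterlim_comp_2; [exact Hu | exact Hv |].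
  exact (@filterlim_plus C_AbsRing C_NormedModule a b).
Qed.

Lemma is_lim_Cseq_mult u v a b :
  is_lim_Cseq u a -> is_lim_Cseq v b -> is_lim_Cseq (fun n => Cmult (u n) (v n)) (Cmult a b).
Proof.
  intros [U1 U2]%is_lim_Cseq_spec [V1 V2]%is_lim_Cseq_spec. apply is_lim_Cseq_spec; split.
  - apply is_lim_seq_minus'; apply is_lim_seq_mult'; assumption.
  - apply is_lim_seq_plus'; apply is_lim_seq_mult'; assumption.
Qed.

Lemma is_lim_Cseq_incr_n u l N : is_lim_Cseq (fun n => u (n + N)%nat) l -> is_lim_Cseq u l.
Proof.
  intros H P HP. destruct (H P HP) as [M HM].
  exists (M + N)%nat; intros n Hn. replace n with ((n - N) + N)%nat by lia. apply HM; lia.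
Qed.

Lemma is_lim_Cseq_shift u l N : is_lim_Cseq u l -> is_lim_Cseq (fun n => u (n + N)%nat) l.
Proof. intros H P HP. destruct (H P HP) as [M HM]. exists M; intros n Hn. apply HM; lia. Qed.

Lemma is_lim_Cseq_Cmod u l : is_lim_Cseq u l -> is_lim_seq (fun n => Cmod (u n)) (Cmod l).
Proof.
  intros H. eapply filterlim_comp; [exact H |].
  exact (@filterlim_norm C_AbsRing C_NormedModule l).
Qed.

Lemma cSeries_correct (a : nat -> C) S : is_series a S -> cSeries a = S.
Proof. apply cLim_correct. Qed.

Lemma is_series_C_unique (a : nat -> C) S1 S2 : is_series a S1 -> is_series a S2 -> S1 = S2.
Proof. apply is_lim_Cseq_unique. Qed.

Lemma ex_series_C_le (a : nat -> C) (M : nat -> R) :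
  (forall k, Cmod (a k) <= M k) -> ex_series M -> is_series a (cSeries a).
Proof.
  intros Hle HM. destruct (@ex_series_le C_AbsRing C_CompleteNormedModule a M Hle HM) as [S HS].
  now rewrite (cSeries_correct _ _ HS).
Qed.

Lemma is_series_Cmult_l (c : C) (a : nat -> C) S :
  is_series a S -> is_series (fun k => Cmult c (a k)) (Cmult c S).
Proof. exact (@is_series_scal_l C_AbsRing C_NormedModule c a S). Qed.

Lemma is_series_C_decr_1 (a : nat -> C) l :
  a O = RtoC 0 -> is_series (fun k => a (S k)) l -> is_series a l.
Proof.
  intros H0 H. apply (@is_series_decr_1 C_AbsRing C_NormedModule).
  assert (E : @plus (NormedModule.AbelianMonoid C_AbsRing C_NormedModule) l
                (@opp (NormedModule.AbelianGroup C_AbsRing C_NormedModule) (a O)) = l)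
    by (rewrite H0; unfold plus, opp; simpl; ring).
  now rewrite E.
Qed.

Lemma Re_sum_n (a : nat -> C) N : Re (sum_n a N) = sum_n (fun n => Re (a n)) N.
Proof. induction N; [now rewrite !sum_O | now rewrite !sum_Sn, <- IHN]. Qed.

Lemma Im_sum_n (a : nat -> C) N : Im (sum_n a N) = sum_n (fun n => Im (a n)) N.
Proof. induction N; [now rewrite !sum_O | now rewrite !sum_Sn, <- IHN]. Qed.

Lemma is_series_C_spec (a : nat -> C) S :
  is_series a S <->
  is_series (fun k => Re (a k)) (Re S) /\ is_series (fun k => Im (a k)) (Im S).
Proof.
  pose proof (is_lim_Cseq_spec (sum_n a) S) as E.
  split; [intros [H1 H2]%E | intros [H1 H2]; apply E]; split.
  - exact (is_lim_seq_ext _ _ _ (Re_sum_n a) H1).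
  - exact (is_lim_seq_ext _ _ _ (Im_sum_n a) H2).
  - exact (is_lim_seq_ext _ _ (Re S) (fun n => eq_sym (Re_sum_n a n)) H1).
  - exact (is_lim_seq_ext _ _ (Im S) (fun n => eq_sym (Im_sum_n a n)) H2).
Qed.

Lemma is_lim_seq_sum_f_R0 (f : nat -> nat -> R) (g : nat -> R) K :
  (forall k, is_lim_seq (fun n => f n k) (g k)) ->
  is_lim_seq (fun n => sum_f_R0 (f n) K) (sum_f_R0 g K).
Proof. intros H. induction K; simpl; [| apply is_lim_seq_plus']; auto. Qed.

Lemma Series_tail_bound (a M : nat -> R) K :
  (forall k, Rabs (a k) <= M k) -> ex_series M ->
  Rabs (Series (fun k => a (S K + k)%nat)) <= Series (fun k => M (S K + k)%nat).
Proof.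
  intros Hle HM.
  assert (HMt : ex_series (fun k => M (S K + k)%nat)) by now apply ex_series_incr_n.
  eapply Rle_trans; [apply Series_Rabs |].
  2: { apply Series_le; [intros k; split; [apply Rabs_pos | apply Hle] | exact HMt]. }
  apply (@ex_series_le R_AbsRing R_CompleteNormedModule _ (fun k => M (S K + k)%nat)); [| exact HMt].
  intros k. change (Rabs (Rabs (a (S K + k)%nat)) <= M (S K + k)%nat).
  rewrite Rabs_Rabsolu. apply Hle.
Qed.

Lemma Series_tail_lim (M : nat -> R) :
  ex_series M -> is_lim_seq (fun K => Series (fun k => M (S K + k)%nat)) 0.
Proof.
  intros HM. apply is_lim_seq_ext with (fun K => Series M - sum_f_R0 M K).
  - intros K. rewrite (Series_incr_n M (S K)) by (auto; lia). simpl. ring.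
  - replace (Finite 0) with (Finite (Series M - Series M)) by (f_equal; ring).
    apply is_lim_seq_minus'; [apply is_lim_seq_const |].
    apply is_lim_seq_ext with (sum_n M); [intros; apply sum_n_Reals | now apply Series_correct].
Qed.

Theorem tannery (f : nat -> nat -> R) (g M : nat -> R) :
  (forall k, is_lim_seq (fun n => f n k) (g k)) ->
  (forall n k, Rabs (f n k) <= M k) -> ex_series M ->
  is_lim_seq (fun n => Series (f n)) (Series g).
Proof.
  intros Hlim Hle HM.
  assert (Hg : forall k, Rabs (g k) <= M k).
  { intros k. apply (is_lim_seq_le _ _ _ _ (fun n => Hle n k)
      (is_lim_seq_abs _ _ (Hlim k)) (is_lim_seq_const (M k))). }
  pose proof (Series_tail_lim M HM) as HT.
  set (T := fun K => Series (fun k => M (S K + k)%nat)) in HT.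
  apply is_lim_seq_spec. intros eps.
  pose proof (cond_pos eps) as Heps.
  destruct (proj2 (is_lim_seq_spec _ _) HT (pos_div_2 (pos_div_2 eps))) as [K HK].
  specialize (HK K (le_n _)). simpl in HK. rewrite Rminus_0_r in HK.
  destruct (proj2 (is_lim_seq_spec _ _) (is_lim_seq_sum_f_R0 f g K Hlim) (pos_div_2 eps))
    as [N HN].
  exists N. intros n Hn. specialize (HN n Hn). simpl in HN.
  assert (Hf : ex_series (f n))
    by exact (@ex_series_le R_AbsRing R_CompleteNormedModule _ _ (Hle n) HM).
  assert (Hgs : ex_series g) by exact (@ex_series_le R_AbsRing R_CompleteNormedModule _ _ Hg HM).
  rewrite (Series_incr_n (f n) (S K)), (Series_incr_n g (S K)) by (auto; lia). simpl pred.
  pose proof (Series_tail_bound (f n) M K (Hle n) HM) as B1.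
  pose proof (Series_tail_bound g M K Hg HM) as B2.
  fold (T K) in B1, B2. rewrite Rabs_right in HK by (apply Rle_ge, (Rle_trans _ _ _ (Rabs_pos _) B1)).
  set (b1 := Series (fun k => f n (S K + k)%nat)) in *.
  set (b2 := Series (fun k => g (S K + k)%nat)) in *.
  replace (sum_f_R0 (f n) K + b1 - (sum_f_R0 g K + b2))
    with ((sum_f_R0 (f n) K - sum_f_R0 g K) + (b1 - b2)) by ring.
  assert (Hb : Rabs (b1 - b2) <= Rabs b1 + Rabs b2).
  { unfold Rminus. rewrite <- (Rabs_Ropp b2). apply Rabs_triang. }
  pose proof (Rabs_triang (sum_f_R0 (f n) K - sum_f_R0 g K) (b1 - b2)).
  simpl in HK, HN. lra.
Qed.

Lemma im_le_Cmod (c : C) : Rabs (Im c) <= Cmod c.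
Proof. eapply Rle_trans; [apply Rmax_r | apply Rmax_Cmod]. Qed.

Theorem tannery_C (f : nat -> nat -> C) (g : nat -> C) (M : nat -> R) (S : nat -> C) (G : C) :
  (forall k, is_lim_Cseq (fun n => f n k) (g k)) ->
  (forall n k, Cmod (f n k) <= M k) -> ex_series M ->
  (forall n, is_series (f n) (S n)) -> is_series g G -> is_lim_Cseq S G.
Proof.
  intros Hlim Hle HM HS [HG1 HG2]%is_series_C_spec.
  apply is_lim_Cseq_spec; split.
  - apply (is_lim_seq_ext (fun n => Series (fun k => Re (f n k)))).
    { intros n. apply is_series_unique, (proj1 (is_series_C_spec _ _) (HS n)). }
    rewrite <- (is_series_unique _ _ HG1). apply tannery with M; auto.
    + intros k. apply (proj1 (is_lim_Cseq_spec _ _) (Hlim k)).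
    + intros n k. eapply Rle_trans; [apply re_le_Cmod | apply Hle].
  - apply (is_lim_seq_ext (fun n => Series (fun k => Im (f n k)))).
    { intros n. apply is_series_unique, (proj1 (is_series_C_spec _ _) (HS n)). }
    rewrite <- (is_series_unique _ _ HG2). apply tannery with M; auto.
    + intros k. apply (proj1 (is_lim_Cseq_spec _ _) (Hlim k)).
    + intros n k. eapply Rle_trans; [apply im_le_Cmod | apply Hle].
Qed.

Lemma is_lim_Cseq_0_le (u : nat -> C) (e : nat -> R) :
  (forall n, Cmod (u n) <= e n) -> is_lim_seq e 0 -> is_lim_Cseq u (RtoC 0).
Proof.
  intros Hle He. apply is_lim_Cseq_spec.
  assert (He' : is_lim_seq (fun n => - e n) 0).
  { generalize (proj1 (is_lim_seq_opp e 0) He). simpl. now rewrite Ropp_0. }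
  split; apply is_lim_seq_le_le with (fun n => - e n) e; auto; intros n; apply Rabs_le_between.
  - apply (Rle_trans _ _ _ (re_le_Cmod _) (Hle n)).
  - apply (Rle_trans _ _ _ (im_le_Cmod _) (Hle n)).
Qed.

Definition cexp_polar (z : C) : C := (exp (Re z) * cos (Im z), exp (Re z) * sin (Im z)).

Lemma cexp_polar_plus a b : cexp_polar (Cplus a b) = Cmult (cexp_polar a) (cexp_polar b).
Proof.
  destruct a as [a1 a2], b as [b1 b2]. unfold cexp_polar, Re, Im; simpl.
  rewrite exp_plus, cos_plus, sin_plus. apply injective_projections; simpl; ring.
Qed.

Lemma cexp_polar_0 : cexp_polar (RtoC 0) = RtoC 1.
Proof.
  unfold cexp_polar, Re, Im; simpl. rewrite exp_0, cos_0, sin_0.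
  apply injective_projections; simpl; ring.
Qed.

Section ExpSeries.
Variable z : C.

Let coef (n : nat) : C := Cmult (RtoC (/ INR (fact n))) (Cpow z n).
Let u t := PSeries (fun n => Re (coef n)) t.
Let v t := PSeries (fun n => Im (coef n)) t.

Lemma Cmod_exp_coef n : Cmod (coef n) = / INR (fact n) * Cmod z ^ n.
Proof.
  unfold coef. rewrite Cmod_mult, Cmod_R, Cmod_pow, Rabs_right; auto.
  apply Rle_ge, Rlt_le, Rinv_0_lt_compat, INR_fact_lt_0.
Qed.

Lemma exp_coef_S n : Cmult (RtoC (INR (S n))) (coef (S n)) = Cmult z (coef n).
Proof.
  unfold coef. simpl Cpow.
  replace (/ INR (fact n)) with (INR (S n) * / INR (fact (S n))).
  - rewrite RtoC_mult. ring.
  - rewrite fact_simpl, mult_INR. field. split; [apply INR_fact_neq_0 | apply not_0_INR; lia].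
Qed.

Lemma CV_radius_exp_coef (p : C -> R) :
  (forall c, Rabs (p c) <= Cmod c) -> forall x, Rbar_lt (Rabs x) (CV_radius (fun n => p (coef n))).
Proof.
  intros Hp x. apply Rbar_lt_le_trans with (Rabs x + 1); [simpl; lra |].
  apply (proj1 (Lub_Rbar_correct _)). unfold CV_disk.
  set (y := Cmod z * (Rabs x + 1)).
  apply (@ex_series_le R_AbsRing R_CompleteNormedModule _ (fun n => / INR (fact n) * y ^ n)).
  - intros n. change (Rabs (Rabs (p (coef n) * (Rabs x + 1) ^ n)) <= / INR (fact n) * y ^ n). unfold y.
    rewrite Rabs_Rabsolu, Rabs_mult, Rpow_mult_distr, <- Rmult_assoc, <- Cmod_exp_coef.
    apply Rmult_le_compat; auto using Rabs_pos.
    rewrite <- RPow_abs. apply Req_le. f_equal. apply Rabs_right. pose proof (Rabs_pos x); lra.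
  - exists (exp y). generalize (is_exp_Reals y).
    apply is_series_ext. intros n. rewrite pow_n_pow. apply Rmult_comm.
Qed.

Lemma PSeries_lin_comb (a b : R) (c d : nat -> R) x :
  ex_pseries c x -> ex_pseries d x ->
  PSeries (fun n => a * c n + b * d n) x = a * PSeries c x + b * PSeries d x.
Proof.
  intros Hc Hd.
  rewrite (PSeries_ext _ (PS_plus (PS_scal a c) (PS_scal b d))) by reflexivity.
  rewrite PSeries_plus, !PSeries_scal; try reflexivity;
    apply ex_pseries_scal; auto using Rmult_comm.
Qed.

Lemma Derive_exp_series_proj (p : C -> R) (a b : R) t :
  (forall c, Rabs (p c) <= Cmod c) ->
  (forall n, p (Cmult (RtoC (INR n)) (coef n)) = INR n * p (coef n)) ->
  (forall n, p (Cmult z (coef n)) = a * Re (coef n) + b * Im (coef n)) ->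
  Derive (PSeries (fun n => p (coef n))) t = a * u t + b * v t.
Proof.
  intros Hp Hlin Hz. rewrite Derive_PSeries by now apply CV_radius_exp_coef.
  unfold u, v. rewrite <- PSeries_lin_comb
    by (apply CV_radius_inside, CV_radius_exp_coef; auto using re_le_Cmod, im_le_Cmod).
  apply PSeries_ext. intros n. unfold PS_derive. rewrite <- Hz, <- exp_coef_S. now rewrite Hlin.
Qed.

Lemma ex_derive_exp_series_proj (p : C -> R) t :
  (forall c, Rabs (p c) <= Cmod c) -> ex_derive (PSeries (fun n => p (coef n))) t.
Proof. intros Hp. now apply ex_derive_PSeries, CV_radius_exp_coef. Qed.

Lemma Derive_exp_series_Re t : Derive u t = Re z * u t - Im z * v t.
Proof.
  unfold Rminus. rewrite Ropp_mult_distr_l. apply Derive_exp_series_proj; [apply re_le_Cmod | |].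
  - intros n. unfold Re; simpl. ring.
  - intros n. unfold Re, Im; simpl. ring.
Qed.

Lemma Derive_exp_series_Im t : Derive v t = Im z * u t + Re z * v t.
Proof.
  apply Derive_exp_series_proj; [apply im_le_Cmod | |].
  - intros n. unfold Im; simpl. ring.
  - intros n. unfold Re, Im; simpl. ring.
Qed.

Let exp_ratio t := Cmult (u t, v t) (cexp_polar (Copp (Cmult z (RtoC t)))).

Lemma ex_derive_exp_series_Re t : ex_derive u t.
Proof. apply ex_derive_exp_series_proj, re_le_Cmod. Qed.

Lemma ex_derive_exp_series_Im t : ex_derive v t.
Proof. apply ex_derive_exp_series_proj, im_le_Cmod. Qed.

Lemma exp_ratio_derive_Re t : is_derive (fun t => Re (exp_ratio t)) t 0.
Proof.
  apply (is_derive_ext (fun t => exp (- Re z * t) * (u t * cos (Im z * t) + v t * sin (Im z * t)))).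
  { intros s. unfold exp_ratio, cexp_polar, Re, Im; simpl.
    replace (- (fst z * s - snd z * 0)) with (- fst z * s) by ring.
    replace (- (fst z * 0 + snd z * s)) with (- (snd z * s)) by ring.
    rewrite cos_neg, sin_neg. ring. }
  auto_derive; [auto using ex_derive_exp_series_Re, ex_derive_exp_series_Im |].
  rewrite Derive_exp_series_Re, Derive_exp_series_Im. ring.
Qed.

Lemma exp_ratio_derive_Im t : is_derive (fun t => Im (exp_ratio t)) t 0.
Proof.
  apply (is_derive_ext (fun t => exp (- Re z * t) * (v t * cos (Im z * t) - u t * sin (Im z * t)))).
  { intros s. unfold exp_ratio, cexp_polar, Re, Im; simpl.
    replace (- (fst z * s - snd z * 0)) with (- fst z * s) by ring.
    replace (- (fst z * 0 + snd z * s)) with (- (snd z * s)) by ring.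
    rewrite cos_neg, sin_neg. ring. }
  auto_derive; [auto using ex_derive_exp_series_Re, ex_derive_exp_series_Im |].
  rewrite Derive_exp_series_Re, Derive_exp_series_Im. ring.
Qed.

Lemma exp_ratio_1 : exp_ratio 1 = RtoC 1.
Proof.
  assert (Hre : Re (exp_ratio 0) = Re (exp_ratio 1))
    by (apply (eq_is_derive (fun t => Re (exp_ratio t))); auto using exp_ratio_derive_Re; lra).
  assert (Him : Im (exp_ratio 0) = Im (exp_ratio 1))
    by (apply (eq_is_derive (fun t => Im (exp_ratio t))); auto using exp_ratio_derive_Im; lra).
  assert (H0 : exp_ratio 0 = RtoC 1).
  { unfold exp_ratio, u, v. rewrite !PSeries_0. replace (Copp (Cmult z (RtoC 0))) with (RtoC 0) by ring.
    rewrite cexp_polar_0. unfold coef. simpl. apply injective_projections; simpl; field. }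
  apply injective_projections;
    [change (Re (exp_ratio 1) = Re (RtoC 1)); rewrite <- Hre
    | change (Im (exp_ratio 1) = Im (RtoC 1)); rewrite <- Him]; now rewrite H0.
Qed.

Lemma exp_series_at_1 : ((u 1, v 1) : C) = cexp_polar z.
Proof.
  transitivity (Cmult (exp_ratio 1) (cexp_polar z)).
  - unfold exp_ratio. rewrite <- Cmult_assoc, <- cexp_polar_plus.
    replace (Cplus (Copp (Cmult z (RtoC 1))) z) with (RtoC 0) by ring.
    rewrite cexp_polar_0. symmetry. apply Cmult_1_r.
  - rewrite exp_ratio_1. apply Cmult_1_l.
Qed.

Lemma cexp_eq_exp_series : cexp z = (u 1, v 1).
Proof.
  unfold cexp, cSeries, cLim, u, v, PSeries, Series. f_equal; f_equal; apply Lim_seq_ext; intros N.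
  - rewrite Re_sum_n. apply sum_n_ext. intros n. rewrite pow1, Rmult_1_r. reflexivity.
  - rewrite Im_sum_n. apply sum_n_ext. intros n. rewrite pow1, Rmult_1_r. reflexivity.
Qed.

End ExpSeries.

Lemma cexp_eq_polar z : cexp z = cexp_polar z.
Proof. rewrite cexp_eq_exp_series. apply exp_series_at_1. Qed.

Lemma cexp_plus a b : cexp (Cplus a b) = Cmult (cexp a) (cexp b).
Proof. rewrite !cexp_eq_polar. apply cexp_polar_plus. Qed.

Lemma cexp_R x : cexp (RtoC x) = RtoC (exp x).
Proof.
  rewrite cexp_eq_polar. unfold cexp_polar, Re, Im; simpl. rewrite cos_0, sin_0.
  apply injective_projections; simpl; ring.
Qed.

Lemma Cmod_cexp z : Cmod (cexp z) = exp (Re z).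
Proof.
  rewrite cexp_eq_polar. unfold cexp_polar, Cmod; cbn [fst snd].
  replace ((exp (Re z) * cos (Im z)) ^ 2 + (exp (Re z) * sin (Im z)) ^ 2)
    with (exp (Re z) ^ 2 * (Rsqr (sin (Im z)) + Rsqr (cos (Im z)))) by (unfold Rsqr; ring).
  rewrite sin2_cos2, Rmult_1_r. apply sqrt_pow2, Rlt_le, exp_pos.
Qed.

Lemma cexp_neq0 z : cexp z <> RtoC 0.
Proof.
  intros H. pose proof (exp_pos (Re z)). rewrite <- Cmod_cexp, H, Cmod_0 in *. lra.
Qed.

Lemma cexp_opp z : cexp (Copp z) = Cinv (cexp z).
Proof.
  pose proof (cexp_neq0 z) as Hz.
  replace (cexp (Copp z)) with (Cmult (cexp (Copp z)) (Cmult (cexp z) (Cinv (cexp z)))) by (field; exact Hz).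
  rewrite Cmult_assoc, <- cexp_plus. replace (Cplus (Copp z) z) with (RtoC 0) by ring.
  rewrite cexp_R, exp_0. apply Cmult_1_l.
Qed.

Lemma cexp_i_mult t : cexp (Cmult Ci (RtoC t)) = (cos t, sin t).
Proof.
  rewrite cexp_eq_polar. unfold cexp_polar, Re, Im; simpl.
  replace (0 * t - 1 * 0) with 0 by ring. replace (0 * 0 + 1 * t) with t by ring.
  rewrite exp_0. apply injective_projections; simpl; ring.
Qed.

Definition sign (n : nat) : C := RtoC ((-1) ^ n).

Lemma sign_add n k : sign (n + k) = Cmult (sign n) (sign k).
Proof. unfold sign. now rewrite pow_add, RtoC_mult. Qed.

Lemma sign_S n : sign (S n) = Copp (sign n).
Proof.
  unfold sign. simpl pow. rewrite RtoC_mult.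
  replace (RtoC (-1)) with (Copp (RtoC 1)) by (apply injective_projections; simpl; lra). ring.
Qed.

Lemma sign_sq n : Cmult (sign n) (sign n) = RtoC 1.
Proof.
  induction n as [| n IH]; [unfold sign; simpl; ring |].
  rewrite sign_S, <- IH. ring.
Qed.

Lemma sign_neq0 n : sign n <> RtoC 0.
Proof. intros H. pose proof (sign_sq n) as E. rewrite H, Cmult_0_l in E.
  apply (f_equal Re) in E. unfold Re in E; simpl in E. lra.
Qed.

Lemma sign_inv n : Cinv (sign n) = sign n.
Proof.
  pose proof (sign_neq0 n). rewrite <- (Cmult_1_l (Cinv (sign n))), <- (sign_sq n). field. auto.
Qed.

Lemma Cmod_sign n : Cmod (sign n) = 1.
Proof. unfold sign. now rewrite Cmod_R, pow_1_abs. Qed.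

Lemma Cpow_opp (x : C) k : Cpow (Copp x) k = Cmult (sign k) (Cpow x k).
Proof.
  induction k as [| k IH]; [unfold sign; simpl; ring |].
  rewrite !Cpow_S, IH, sign_S. ring.
Qed.

Lemma cos_sin_PI_mult_nat n : cos (PI * INR n) = (-1) ^ n /\ sin (PI * INR n) = 0.
Proof.
  induction n as [| n [Hc Hs]].
  - simpl. rewrite Rmult_0_r, cos_0, sin_0. auto.
  - rewrite S_INR, Rmult_plus_distr_l, Rmult_1_r, neg_cos, neg_sin, Hc, Hs. simpl. split; ring.
Qed.

Lemma Ci_neq0 : Ci <> RtoC 0.
Proof. intros H. apply (f_equal Im) in H. unfold Im in H; simpl in H. lra. Qed.

Lemma csin_sub_PI_nat x n :
  csin (Cminus x (RtoC (PI * INR n))) = Cmult (sign n) (csin x).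
Proof.
  unfold csin. destruct (cos_sin_PI_mult_nat n) as [Hc Hs].
  replace (Copp (Cmult Ci (Cminus x (RtoC (PI * INR n)))))
    with (Cplus (Copp (Cmult Ci x)) (Cmult Ci (RtoC (PI * INR n)))) by ring.
  replace (Cmult Ci (Cminus x (RtoC (PI * INR n))))
    with (Cplus (Cmult Ci x) (Cmult Ci (RtoC (- (PI * INR n))))) by (rewrite RtoC_opp; ring).
  rewrite !cexp_plus, !cexp_i_mult, cos_neg, sin_neg, Hc, Hs, Ropp_0.
  change ((-1) ^ n, 0) with (sign n). field. apply Ci_neq0.
Qed.

Lemma csin_opp x : csin (Copp x) = Copp (csin x).
Proof.
  unfold csin. replace (Cmult Ci (Copp x)) with (Copp (Cmult Ci x)) by ring.
  replace (Copp (Copp (Cmult Ci x))) with (Cmult Ci x) by ring.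
  field. apply Ci_neq0.
Qed.

Section QPower.
Variable q : R.
Hypothesis q_pos : 0 < q.

Lemma qpow_plus a b : qpow q (Cplus a b) = Cmult (qpow q a) (qpow q b).
Proof. unfold qpow. rewrite <- cexp_plus. f_equal. ring. Qed.

Lemma qpow_R x : qpow q (RtoC x) = RtoC (Rpower q x).
Proof. unfold qpow, Rpower. now rewrite <- RtoC_mult, cexp_R. Qed.

Lemma qpow_INR n : qpow q (RtoC (INR n)) = RtoC (q ^ n).
Proof. now rewrite qpow_R, Rpower_pow. Qed.

Lemma qpow_IZR m : qpow q (RtoC (IZR m)) = RtoC (powerRZ q m).
Proof. now rewrite qpow_R, powerRZ_Rpower. Qed.

Lemma qpow_opp s : qpow q (Copp s) = Cinv (qpow q s).
Proof. unfold qpow. rewrite <- cexp_opp. f_equal. ring. Qed.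

Lemma Cmod_qpow s : Cmod (qpow q s) = Rpower q (Re s).
Proof. unfold qpow, Rpower. rewrite Cmod_cexp. f_equal. unfold Re; simpl. ring. Qed.

Lemma qpow_neq0 s : qpow q s <> RtoC 0.
Proof. apply cexp_neq0. Qed.

Lemma qpow_mult_INR n s : qpow q (Cmult (RtoC (INR n)) s) = Cpow (qpow q s) n.
Proof.
  induction n as [| n IH].
  - simpl. replace (Cmult (RtoC 0) s) with (RtoC 0) by ring. now rewrite qpow_R, Rpower_O.
  - rewrite S_INR, RtoC_plus, Cpow_S, <- IH, <- qpow_plus. f_equal. ring.
Qed.
End QPower.

Lemma Cmod_minus_ge (a b : C) : Cmod a - Cmod b <= Cmod (Cminus a b).
Proof.
  pose proof (Cmod_triangle (Cminus a b) b). replace (Cplus (Cminus a b) b) with a in * by ring. lra.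
Qed.

Ltac RtoC_neq0 := let H := fresh in intros H; apply (f_equal Re) in H; unfold Re in H; simpl in H; lra.

Lemma Cmult_neq0 (x y : C) : x <> RtoC 0 -> y <> RtoC 0 -> Cmult x y <> RtoC 0.
Proof.
  intros Hx Hy H. apply (f_equal Cmod) in H. rewrite Cmod_mult, Cmod_0 in H.
  destruct (Rmult_integral _ _ H) as [E | E]; apply Cmod_eq_0 in E; auto.
Qed.

Lemma pow_bounds_01 x k : 0 < x < 1 -> 0 < x ^ k <= 1.
Proof. intros Hx. split; [apply pow_lt; lra | rewrite <- (pow1 k); apply pow_incr; lra]. Qed.

Lemma exp_le_compat x y : x <= y -> exp x <= exp y.
Proof. intros [H | ->]; [now apply Rlt_le, exp_increasing | apply Rle_refl]. Qed.

Lemma Rpower_le_contravar b x y : 0 < b < 1 -> x <= y -> Rpower b y <= Rpower b x.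
Proof.
  intros Hb H. unfold Rpower. apply exp_le_compat.
  assert (ln b < 0) by (rewrite <- ln_1; apply ln_increasing; lra). nra.
Qed.

Section QPochhammer.
Variable q : R.
Hypothesis q_bounds : 0 < q < 1.

Lemma qpoch_add a k m :
  qpoch a q (k + m) = Cmult (qpoch a q k) (qpoch (Cmult a (RtoC (q ^ k))) q m).
Proof.
  induction m as [| m IH].
  - rewrite Nat.add_0_r. simpl. ring.
  - rewrite Nat.add_succ_r. simpl. rewrite IH, pow_add, RtoC_mult. ring.
Qed.

Lemma qpoch_S_l a m : qpoch a q (S m) = Cmult (Cminus (RtoC 1) a) (qpoch (Cmult a (RtoC q)) q m).
Proof. change (S m) with (1 + m)%nat. rewrite qpoch_add. simpl. rewrite Rmult_1_r. ring. Qed.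

Lemma Cmod_qpoch_factor a j : Cmod (Cmult a (RtoC (q ^ j))) = Cmod a * q ^ j.
Proof.
  rewrite Cmod_mult, Cmod_R, Rabs_right; [reflexivity | apply Rle_ge, Rlt_le, pow_bounds_01, q_bounds].
Qed.

(* The partial sums [(1 - q^k)/(1 - q)] of the geometric series make both bounds inductive. *)
Lemma Cmod_qpoch_le_partial a k :
  Cmod (qpoch a q k) <= exp (Cmod a * ((1 - q ^ k) / (1 - q))).
Proof.
  induction k as [| k IH]; simpl qpoch.
  - rewrite Cmod_1, pow_O. replace (Cmod a * ((1 - 1) / (1 - q))) with 0 by (field; lra).
    rewrite exp_0. lra.
  - replace (Cmod a * ((1 - q ^ S k) / (1 - q)))
      with (Cmod a * ((1 - q ^ k) / (1 - q)) + Cmod a * q ^ k) by (simpl; field; lra).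
    rewrite Cmod_mult, exp_plus. apply Rmult_le_compat; auto using Cmod_ge_0.
    eapply Rle_trans; [apply Cmod_triangle |].
    rewrite Cmod_opp, Cmod_1, Cmod_qpoch_factor. apply exp_ineq1_le.
Qed.

Lemma Cmod_qpoch_le a k : Cmod (qpoch a q k) <= exp (Cmod a / (1 - q)).
Proof.
  eapply Rle_trans; [apply Cmod_qpoch_le_partial | apply exp_le_compat].
  unfold Rdiv. rewrite <- Rmult_assoc. apply Rmult_le_compat_r; [apply Rlt_le, Rinv_0_lt_compat; lra |].
  pose proof (Cmod_ge_0 a). pose proof (pow_bounds_01 q k q_bounds). nra.
Qed.

Lemma Cmod_qpoch_ge_partial a k :
  Cmod a <= 1 -> 1 - Cmod a * ((1 - q ^ k) / (1 - q)) <= Cmod (qpoch a q k).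
Proof.
  intros Ha. induction k as [| k IH]; simpl qpoch.
  - rewrite Cmod_1, pow_O. replace (Cmod a * ((1 - 1) / (1 - q))) with 0 by (field; lra). lra.
  - replace (1 - Cmod a * ((1 - q ^ S k) / (1 - q)))
      with (1 - Cmod a * ((1 - q ^ k) / (1 - q)) - Cmod a * q ^ k) by (simpl; field; lra).
    set (s := Cmod a * ((1 - q ^ k) / (1 - q))) in *.
    assert (Hs : 0 <= s) by (apply Rmult_le_pos; [apply Cmod_ge_0 | pose proof (pow_bounds_01 q k q_bounds);
      apply Rdiv_le_0_compat; lra]).
    assert (Hf : 1 - Cmod a * q ^ k <= Cmod (Cminus (RtoC 1) (Cmult a (RtoC (q ^ k))))).
    { rewrite <- Cmod_1 at 1. rewrite <- Cmod_qpoch_factor. apply Cmod_minus_ge. }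
    pose proof (pow_bounds_01 q k q_bounds). pose proof (Cmod_ge_0 a).
    pose proof (Cmod_ge_0 (qpoch a q k)). pose proof (Cmod_ge_0 (Cminus (RtoC 1) (Cmult a (RtoC (q ^ k))))).
    assert (Haq : 0 <= Cmod a * q ^ k <= 1) by (split; nra).
    rewrite Cmod_mult. destruct (Rle_dec (1 - s) 0).
    + pose proof (Rmult_le_pos _ _ H1 H2). lra.
    + apply Rle_trans with ((1 - s) * (1 - Cmod a * q ^ k)); [nra | apply Rmult_le_compat; lra].
Qed.

Lemma Cmod_qpoch_ge a k : Cmod a < 1 - q -> 1 - Cmod a / (1 - q) <= Cmod (qpoch a q k).
Proof.
  intros Ha. eapply Rle_trans; [| apply Cmod_qpoch_ge_partial; lra].
  pose proof (pow_bounds_01 q k q_bounds). pose proof (Cmod_ge_0 a).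
  assert (0 <= Cmod a * q ^ k / (1 - q)) by (apply Rdiv_le_0_compat; [nra | lra]).
  replace (1 - Cmod a * ((1 - q ^ k) / (1 - q))) with (1 - Cmod a / (1 - q) + Cmod a * q ^ k / (1 - q))
    by (field; lra).
  lra.
Qed.

Lemma sum_n_telescope (u : nat -> C) N :
  sum_n (fun j => Cminus (u (S j)) (u j)) N = Cminus (u (S N)) (u O).
Proof.
  induction N as [| N IH]; [now rewrite sum_O | rewrite sum_Sn, IH]. unfold plus; simpl. ring.
Qed.

Lemma qpoch_inf_correct a : is_lim_Cseq (qpoch a q) (qpoch_inf a q).
Proof.
  set (d := fun j => Cminus (qpoch a q (S j)) (qpoch a q j)).
  set (B := exp (Cmod a / (1 - q))).
  assert (Hd : forall j, Cmod (d j) <= B * Cmod a * q ^ j).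
  { intros j. unfold d. simpl qpoch.
    replace (Cminus (Cmult (qpoch a q j) (Cminus (RtoC 1) (Cmult a (RtoC (q ^ j))))) (qpoch a q j))
      with (Copp (Cmult (qpoch a q j) (Cmult a (RtoC (q ^ j))))) by ring.
    rewrite Cmod_opp, Cmod_mult, Cmod_qpoch_factor, Rmult_assoc.
    apply Rmult_le_compat_r; [pose proof (Cmod_ge_0 a); pose proof (pow_bounds_01 q j q_bounds); nra |].
    apply Cmod_qpoch_le. }
  assert (Hgeom : ex_series (fun j => B * Cmod a * q ^ j)).
  { apply (@ex_series_scal_l R_AbsRing R_NormedModule), ex_series_geom. rewrite Rabs_right; lra. }
  pose proof (ex_series_C_le d _ Hd Hgeom) as Hsum.
  assert (Hlim : is_lim_Cseq (qpoch a q) (Cplus (RtoC 1) (cSeries d))).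
  { apply is_lim_Cseq_incr_n with 1%nat.
    apply (is_lim_Cseq_ext (fun N => Cplus (RtoC 1) (sum_n d N))).
    - intros N. unfold d. rewrite sum_n_telescope, Nat.add_1_r. simpl. ring.
    - apply is_lim_Cseq_plus; [apply is_lim_Cseq_const | exact Hsum]. }
  unfold qpoch_inf. now rewrite (cLim_correct (fun k => qpoch a q k) _ Hlim).
Qed.

Lemma qpoch_inf_split a k :
  qpoch_inf a q = Cmult (qpoch a q k) (qpoch_inf (Cmult a (RtoC (q ^ k))) q).
Proof.
  apply (is_lim_Cseq_unique (fun m => qpoch a q (m + k))).
  - apply is_lim_Cseq_shift, qpoch_inf_correct.
  - apply (is_lim_Cseq_ext (fun m => Cmult (qpoch a q k) (qpoch (Cmult a (RtoC (q ^ k))) q m))).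
    + intros m. now rewrite Nat.add_comm, qpoch_add.
    + apply is_lim_Cseq_mult; [apply is_lim_Cseq_const | apply qpoch_inf_correct].
Qed.

Lemma Cmod_qpoch_inf_le a : Cmod (qpoch_inf a q) <= exp (Cmod a / (1 - q)).
Proof.
  apply (is_lim_seq_le _ _ _ _ (Cmod_qpoch_le a)
    (is_lim_Cseq_Cmod _ _ (qpoch_inf_correct a)) (is_lim_seq_const _)).
Qed.

Lemma Cmod_qpoch_inf_ge a : Cmod a < 1 - q -> 1 - Cmod a / (1 - q) <= Cmod (qpoch_inf a q).
Proof.
  intros Ha. apply (is_lim_seq_le _ _ _ _ (fun k => Cmod_qpoch_ge a k Ha) (is_lim_seq_const _)
    (is_lim_Cseq_Cmod _ _ (qpoch_inf_correct a))).
Qed.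

Lemma qpoch_neq0 a k :
  (forall j, Cminus (RtoC 1) (Cmult a (RtoC (q ^ j))) <> RtoC 0) -> qpoch a q k <> RtoC 0.
Proof.
  intros H. induction k as [| k IH]; simpl; [RtoC_neq0 | now apply Cmult_neq0].
Qed.

(* Split off a finite product long enough that the tail has [|a q^J| < (1 - q)/2]; the tail is then
   bounded away from zero. *)
Lemma qpoch_inf_neq0 a :
  (forall j, Cminus (RtoC 1) (Cmult a (RtoC (q ^ j))) <> RtoC 0) -> qpoch_inf a q <> RtoC 0.
Proof.
  intros H.
  assert (HJ : exists J, Cmod a * q ^ J < (1 - q) / 2).
  { assert (L := is_lim_seq_scal_l _ (Cmod a) _ (is_lim_seq_geom q ltac:(rewrite Rabs_right; lra))).
    simpl in L. rewrite Rmult_0_r in L.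
    assert (Hp : 0 < (1 - q) / 2) by lra.
    destruct (proj2 (is_lim_seq_spec _ _) L (mkposreal _ Hp)) as [N HN].
    exists N. specialize (HN N (le_n _)). simpl in HN. rewrite Rminus_0_r in HN.
    apply Rabs_lt_between in HN. lra. }
  destruct HJ as [J HJ].
  rewrite (qpoch_inf_split a J). apply Cmult_neq0; [now apply qpoch_neq0 |].
  intros E. rewrite <- Cmod_qpoch_factor in HJ.
  pose proof (Cmod_qpoch_inf_ge (Cmult a (RtoC (q ^ J))) ltac:(lra)) as Hge.
  rewrite E, Cmod_0 in Hge.
  assert (Cmod (Cmult a (RtoC (q ^ J))) / (1 - q) < 1 / 2)
    by (apply Rmult_lt_reg_r with (1 - q); [lra | unfold Rdiv; rewrite Rmult_assoc, Rinv_l; lra]).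
  lra.
Qed.
End QPochhammer.

Fixpoint qpoch_real (q : R) (k : nat) : R :=
  match k with O => 1 | S k' => qpoch_real q k' * (1 - q * q ^ k') end.

Section Euler.
Variable q : R.
Hypothesis q_bounds : 0 < q < 1.

Let r := sqrt q.

Let qpow_lt_1 k : 0 < q * q ^ k < 1.
Proof.
  pose proof (pow_bounds_01 q k q_bounds).
  split; nra.
Qed.

Lemma qpoch_q_real k : qpoch (RtoC q) q k = RtoC (qpoch_real q k).
Proof.
  induction k as [| k IH]; [reflexivity |]. simpl. now rewrite IH, RtoC_mult, RtoC_minus, RtoC_mult.
Qed.

Lemma qpoch_real_pos k : 0 < qpoch_real q k.
Proof. induction k as [| k IH]; simpl; [lra |]. pose proof (qpow_lt_1 k). apply Rmult_lt_0_compat; lra. Qed.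

(* [r^(k(k-1)) = q^(k(k-1)/2)] *)
Definition euler_coef k := r ^ (k * (k - 1)) / qpoch_real q k.
Definition euler_term (z : C) k := Cmult (RtoC (euler_coef k)) (Cpow z k).

Lemma euler_coef_pos k : 0 < euler_coef k.
Proof. apply Rdiv_lt_0_compat; [apply pow_lt, sqrt_lt_R0; lra | apply qpoch_real_pos]. Qed.

Lemma euler_coef_S k : euler_coef (S k) = euler_coef k * (q ^ k / (1 - q * q ^ k)).
Proof.
  unfold euler_coef.
  replace (S k * (S k - 1))%nat with (k * (k - 1) + 2 * k)%nat by (destruct k; [reflexivity | simpl; nia]).
  rewrite pow_add, (pow_mult r 2 k).
  replace (r ^ 2) with q by (unfold r; simpl; rewrite Rmult_1_r, sqrt_sqrt; lra).
  simpl qpoch_real. pose proof (qpoch_real_pos k). pose proof (qpow_lt_1 k). field. lra.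
Qed.

Lemma ex_series_euler_majorant rho : 0 < rho -> ex_series (fun k => euler_coef k * rho ^ k).
Proof.
  intros Hrho.
  assert (Hpos : forall k, 0 < euler_coef k * rho ^ k)
    by (intros k; apply Rmult_lt_0_compat; [apply euler_coef_pos | now apply pow_lt]).
  apply (ex_series_ext (fun k => Rabs (euler_coef k * rho ^ k))).
  { intros k. apply Rabs_right, Rle_ge, Rlt_le, Hpos. }
  apply (ex_series_DAlembert _ 0); [lra | intros k; apply Rgt_not_eq, Hpos |].
  apply (is_lim_seq_ext (fun k => Rabs (rho * q ^ k / (1 - q * q ^ k)))).
  { intros k. f_equal. rewrite euler_coef_S. simpl.
    pose proof (qpow_lt_1 k). pose proof (euler_coef_pos k). pose proof (pow_lt rho k Hrho).
    field. repeat split; lra. }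
  assert (Hgeom := is_lim_seq_geom q ltac:(rewrite Rabs_right; lra)).
  replace (Finite 0) with (Rbar_abs (rho * 0 / (1 - q * 0)))
    by (simpl; f_equal; rewrite Rmult_0_r, Rdiv_0_l, Rabs_R0; auto).
  apply is_lim_seq_abs, is_lim_seq_div'; [| apply is_lim_seq_minus'; [apply is_lim_seq_const |] | lra];
    now apply is_lim_seq_scal_l with (lu := Finite 0).
Qed.

Lemma Cmod_euler_term_le z k : Cmod (euler_term z k) <= euler_coef k * (Cmod z + 1) ^ k.
Proof.
  pose proof (euler_coef_pos k).
  unfold euler_term. rewrite Cmod_mult, Cmod_R, Cmod_pow, Rabs_right by lra.
  apply Rmult_le_compat_l; [lra |]. apply pow_incr. pose proof (Cmod_ge_0 z). lra.
Qed.

Lemma ex_series_euler_majorant_Cmod z : ex_series (fun k => euler_coef k * (Cmod z + 1) ^ k).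
Proof. apply ex_series_euler_majorant. pose proof (Cmod_ge_0 z). lra. Qed.

Definition euler_sum z := cSeries (euler_term z).

Lemma euler_sum_correct z : is_series (euler_term z) (euler_sum z).
Proof. apply (ex_series_C_le _ _ (Cmod_euler_term_le z) (ex_series_euler_majorant_Cmod z)). Qed.

Lemma euler_term_S_sub z j :
  Cminus (euler_term z (S j)) (euler_term (Cmult (RtoC q) z) (S j))
  = Cmult z (euler_term (Cmult (RtoC q) z) j).
Proof.
  assert (Hqj : q ^ j <> 0) by (apply pow_nonzero; lra).
  assert (HqjC : RtoC (q ^ j) <> RtoC 0) by (intros E; apply (f_equal Re) in E; contradiction).
  unfold euler_term. rewrite !Cpow_mult_l, <- !RtoC_pow, !Cpow_S.
  replace (euler_coef j) with (euler_coef (S j) * (1 - q * q ^ j) / q ^ j).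
  - simpl pow. rewrite RtoC_div by exact Hqj. rewrite !RtoC_mult, RtoC_minus, RtoC_mult.
    field. exact HqjC.
  - rewrite euler_coef_S. pose proof (qpow_lt_1 j). pose proof (pow_lt q j ltac:(lra)). field. lra.
Qed.

Lemma euler_sum_rec z : euler_sum z = Cmult (Cplus (RtoC 1) z) (euler_sum (Cmult (RtoC q) z)).
Proof.
  set (G := euler_sum (Cmult (RtoC q) z)).
  enough (E : Cminus (euler_sum z) G = Cmult z G)
    by (replace (euler_sum z) with (Cplus (Cminus (euler_sum z) G) G) by ring; rewrite E; ring).
  apply (is_series_C_unique (fun k => Cminus (euler_term z k) (euler_term (Cmult (RtoC q) z) k))).
  - exact (@is_series_minus C_AbsRing C_NormedModule _ _ _ _
      (euler_sum_correct z) (euler_sum_correct (Cmult (RtoC q) z))).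
  - apply is_series_C_decr_1; [unfold euler_term; simpl; ring |].
    apply (is_series_ext (fun k => Cmult z (euler_term (Cmult (RtoC q) z) k))).
    + intros k. symmetry. apply euler_term_S_sub.
    + apply is_series_Cmult_l, euler_sum_correct.
Qed.

Lemma euler_sum_iter z N :
  euler_sum z = Cmult (qpoch (Copp z) q N) (euler_sum (Cmult (RtoC (q ^ N)) z)).
Proof.
  induction N as [| N IH].
  - simpl. replace (Cmult (RtoC 1) z) with z by ring. ring.
  - rewrite IH, (euler_sum_rec (Cmult (RtoC (q ^ N)) z)).
    replace (Cmult (RtoC q) (Cmult (RtoC (q ^ N)) z)) with (Cmult (RtoC (q ^ S N)) z)
      by (simpl; rewrite RtoC_mult; ring).
    simpl qpoch. ring.
Qed.

(* Tannery: only the constant term survives as [q^N z -> 0]. *)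
Lemma euler_sum_q_pow_lim z : is_lim_Cseq (fun N => euler_sum (Cmult (RtoC (q ^ N)) z)) (RtoC 1).
Proof.
  apply tannery_C with (f := fun N k => euler_term (Cmult (RtoC (q ^ N)) z) k)
    (g := fun k => match k with O => RtoC 1 | S _ => RtoC 0 end)
    (M := fun k => euler_coef k * (Cmod z + 1) ^ k).
  - intros [| k].
    + apply (is_lim_Cseq_ext (fun _ => RtoC 1)); [| apply is_lim_Cseq_const].
      intros n. unfold euler_term, euler_coef. simpl. apply injective_projections; simpl; field.
    + apply is_lim_Cseq_0_le with (fun n => euler_coef (S k) * Cmod z ^ S k * (q ^ S k) ^ n).
      * intros n. unfold euler_term. pose proof (euler_coef_pos (S k)).
        rewrite Cmod_mult, Cmod_R, Cmod_pow, Cmod_mult, Cmod_R, !Rabs_right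
          by (apply Rle_ge; try apply pow_le; lra).
        rewrite Rpow_mult_distr, <- !pow_mult, Nat.mul_comm. lra.
      * replace (Finite 0) with (Finite (euler_coef (S k) * Cmod z ^ S k * 0)) by (f_equal; ring).
        apply is_lim_seq_scal_l with (lu := Finite 0), is_lim_seq_geom.
        pose proof (qpow_lt_1 k). rewrite Rabs_right; simpl; lra.
  - intros n k. eapply Rle_trans; [apply Cmod_euler_term_le |].
    apply Rmult_le_compat_l; [apply Rlt_le, euler_coef_pos |]. apply pow_incr.
    pose proof (Cmod_ge_0 (Cmult (RtoC (q ^ n)) z)). split; [lra |].
    pose proof (pow_bounds_01 q n q_bounds).
    rewrite Cmod_mult, Cmod_R, Rabs_right by lra. pose proof (Cmod_ge_0 z). nra.
  - apply ex_series_euler_majorant_Cmod.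
  - intros n. apply euler_sum_correct.
  - apply (is_lim_Cseq_ext (fun _ => RtoC 1)); [| apply is_lim_Cseq_const].
    intros N. induction N as [| N IH]; [now rewrite sum_O |].
    rewrite sum_Sn, <- IH. unfold plus; simpl. ring.
Qed.

Theorem euler_identity z : is_series (euler_term z) (qpoch_inf (Copp z) q).
Proof.
  replace (qpoch_inf (Copp z) q) with (euler_sum z); [apply euler_sum_correct |].
  apply (is_lim_Cseq_unique (fun N => Cmult (qpoch (Copp z) q N) (euler_sum (Cmult (RtoC (q ^ N)) z)))).
  - apply (is_lim_Cseq_ext (fun _ => euler_sum z)); [apply euler_sum_iter | apply is_lim_Cseq_const].
  - rewrite <- (Cmult_1_r (qpoch_inf (Copp z) q)).
    apply is_lim_Cseq_mult; [apply qpoch_inf_correct; lra | apply euler_sum_q_pow_lim].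
Qed.
End Euler.

Lemma INR_mult_pred k : INR (k * (k - 1)) = INR k * (INR k - 1).
Proof.
  destruct k; [simpl; ring |].
  rewrite mult_INR. replace (S k - 1)%nat with k by lia. rewrite S_INR. ring.
Qed.

Section QPowerIdentities.
Variable q : R.
Hypothesis q_pos : 0 < q.
Local Notation Q := (qpow q).

Lemma qpow_half_square k : Q (RtoC (INR k * INR k / 2)) = RtoC (sqrt q ^ (k * k)).
Proof.
  rewrite qpow_R by exact q_pos. f_equal.
  rewrite <- Rpower_sqrt, <- Rpower_pow by (try apply exp_pos; exact q_pos).
  rewrite Rpower_mult, mult_INR. f_equal. field.
Qed.

(* [(q^(s-m);q)_m = (-1)^m q^(m s - m(m+1)/2) (q^(1-s);q)_m]: reverse the order of the factors. *)
Definition reflect_exponent (s : C) m := Cminus (Cmult (RtoC (INR m)) s) (RtoC (INR m * (INR m + 1) / 2)).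

Lemma qpoch_reflect (s : C) m :
  qpoch (Q (Cminus s (RtoC (INR m)))) q m =
  Cmult (Cmult (sign m) (Q (reflect_exponent s m))) (qpoch (Q (Cminus (RtoC 1) s)) q m).
Proof.
  induction m as [| m IH].
  - unfold reflect_exponent, sign. simpl.
    replace (Cminus (Cmult (RtoC 0) s) (RtoC (0 * (0 + 1) / 2))) with (RtoC 0)
      by (apply injective_projections; simpl; field).
    rewrite qpow_R, Rpower_O by exact q_pos. ring.
  - rewrite qpoch_S_l.
    set (X := Q (Cminus s (RtoC (INR (S m))))).
    assert (HX : X <> RtoC 0) by apply qpow_neq0.
    assert (E1 : Cmult X (RtoC q) = Q (Cminus s (RtoC (INR m)))).
    { replace (RtoC q) with (Q (RtoC 1)) by (rewrite qpow_R, Rpower_1; auto).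
      unfold X. rewrite <- qpow_plus. f_equal.
      rewrite S_INR, RtoC_plus. ring. }
    assert (E2 : Cmult (Q (Cminus (RtoC 1) s)) (RtoC (q ^ m)) = Cinv X).
    { unfold X. rewrite <- qpow_opp, <- qpow_INR, <- qpow_plus by exact q_pos. f_equal.
      rewrite S_INR, RtoC_plus. ring. }
    assert (E3 : Q (reflect_exponent s (S m)) = Cmult (Q (reflect_exponent s m)) X).
    { unfold X. rewrite <- qpow_plus. f_equal. unfold reflect_exponent.
      rewrite !S_INR, !RtoC_plus, !RtoC_div, !RtoC_mult, !RtoC_plus by lra.
      field. }
    rewrite E1, IH, sign_S, E3. simpl qpoch. rewrite E2. field. exact HX.
Qed.
End QPowerIdentities.

Section Limit.
Variables (q : R) (sigma w : C).
Hypothesis q_bounds : 0 < q < 1.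
Hypothesis sigma_generic : forall m : Z, qpow q sigma <> RtoC (powerRZ q m).

Local Notation Q := (qpow q).
Let q_pos : 0 < q. Proof. lra. Qed.

Definition nu n := Cminus (Copp sigma) (RtoC (INR n)).
(* [bb n = q^(nu+1)] and [zz n = -q^(nu+3/2) w^2] are the parameters of [phi01] in [jfrak (nu n) (2 w)]. *)
Definition bb n := Q (Cplus (nu n) (RtoC 1)).
Definition zz n := Cmult (Copp (Q (Cplus (nu n) (RtoC (3/2)))))
                         (Cdiv (Cmult (Cmult (RtoC 2) w) (Cmult (RtoC 2) w)) (RtoC 4)).
Definition phi_term n k := Cmult (Cdiv (RtoC (q ^ (k * (k - 1))))
                                       (Cmult (qpoch (RtoC q) q k) (qpoch (bb n) q k)))
                                 (Cpow (zz n) k).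
Definition jfrak_exponent n := Cdiv (Cmult (nu n) (Cplus (nu n) (RtoC 1))) (RtoC 4).
Definition prefactor n := Cmult (Cmult (sign n) (Q (Cmult (RtoC 2) (jfrak_exponent n)))) (qpoch_inf (bb n) q).
Definition term n k := Cmult (prefactor n) (phi_term n k).
Definition term_exponent n k :=
  Cplus (Cplus (Cmult (RtoC 2) (jfrak_exponent n)) (RtoC (INR k * (INR k - 1))))
        (Cmult (RtoC (INR k)) (Cplus (nu n) (RtoC (3/2)))).

Lemma bb_pow n k : Cmult (bb n) (RtoC (q ^ k)) = Q (Cplus (Cplus (nu n) (RtoC 1)) (RtoC (INR k))).
Proof. unfold bb. now rewrite (qpow_plus q (Cplus (nu n) (RtoC 1))), (qpow_INR q q_pos). Qed.

(* This is where [q^sigma \notin q^Z] is used. *)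
Lemma bb_factor_neq0 n j : Cminus (RtoC 1) (Cmult (bb n) (RtoC (q ^ j))) <> RtoC 0.
Proof.
  rewrite bb_pow. intros H.
  set (m := (1 + Z.of_nat j - Z.of_nat n)%Z).
  assert (E : Cplus (Cplus (nu n) (RtoC 1)) (RtoC (INR j)) = Cplus (Copp sigma) (RtoC (IZR m))).
  { unfold nu, m. rewrite minus_IZR, plus_IZR, <- !INR_IZR_INZ, !RtoC_minus, !RtoC_plus. ring. }
  rewrite E, qpow_plus, qpow_opp in H.
  assert (Hm : Cmult (Cinv (Q sigma)) (Q (RtoC (IZR m))) = RtoC 1).
  { replace (Cmult (Cinv (Q sigma)) (Q (RtoC (IZR m))))
      with (Cminus (RtoC 1) (Cminus (RtoC 1) (Cmult (Cinv (Q sigma)) (Q (RtoC (IZR m)))))) by ring.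
    rewrite H. ring. }
  apply (sigma_generic m). rewrite <- qpow_IZR, <- (Cmult_1_r (Q sigma)), <- Hm by exact q_pos.
  field. apply qpow_neq0.
Qed.

Lemma qpoch_bb_neq0 n k : qpoch (bb n) q k <> RtoC 0.
Proof. apply qpoch_neq0, bb_factor_neq0. Qed.

Lemma qpoch_inf_bb_neq0 n : qpoch_inf (bb n) q <> RtoC 0.
Proof. apply qpoch_inf_neq0; [exact q_bounds | apply bb_factor_neq0]. Qed.

Lemma qpoch_q_neq0 k : qpoch (RtoC q) q k <> RtoC 0.
Proof.
  rewrite qpoch_q_real. intros H. apply (f_equal Re) in H. unfold Re in H; simpl in H.
  pose proof (qpoch_real_pos q q_bounds k). lra.
Qed.

Lemma qpoch_inf_q_neq0 : qpoch_inf (RtoC q) q <> RtoC 0.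
Proof.
  apply qpoch_inf_neq0; [exact q_bounds |]. intros j H. apply (f_equal Re) in H. unfold Re in H; simpl in H.
  pose proof (pow_bounds_01 q j q_bounds).
  nra.
Qed.

Lemma prefactor_neq0 n : prefactor n <> RtoC 0.
Proof. repeat apply Cmult_neq0; auto using sign_neq0, qpow_neq0, qpoch_inf_bb_neq0. Qed.

Lemma zz_pow n k : Cpow (zz n) k =
  Cmult (Cmult (sign k) (Q (Cmult (RtoC (INR k)) (Cplus (nu n) (RtoC (3/2)))))) (Cpow (Cmult w w) k).
Proof.
  unfold zz. replace (Cdiv (Cmult (Cmult (RtoC 2) w) (Cmult (RtoC 2) w)) (RtoC 4)) with (Cmult w w)
    by (field; RtoC_neq0).
  now rewrite Cpow_mult_l, Cpow_opp, (qpow_mult_INR q q_pos).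
Qed.

Lemma term_eq n k : term n k =
  Cmult (Cmult (Cmult (sign (n + k)) (Q (term_exponent n k)))
               (qpoch_inf (Q (Cplus (Cplus (nu n) (RtoC 1)) (RtoC (INR k)))) q))
        (Cdiv (Cpow (Cmult w w) k) (qpoch (RtoC q) q k)).
Proof.
  unfold term, prefactor, phi_term, term_exponent.
  rewrite (qpoch_inf_split q q_bounds (bb n) k), bb_pow, zz_pow, sign_add, !qpow_plus,
    <- INR_mult_pred, !(qpow_INR q q_pos).
  pose proof (qpoch_bb_neq0 n k). pose proof (qpoch_q_neq0 k). field. auto.
Qed.

Definition diag_const := Cmult (Q (Copp (Cdiv (Cmult sigma (Cminus (RtoC 1) sigma)) (RtoC 2))))
                               (qpoch_inf (Q (Cminus (RtoC 1) sigma)) q).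
Definition euler_w k := euler_term q (Cmult (RtoC (sqrt q)) (Cmult w w)) k.

Lemma euler_w_eq k :
  euler_w k = Cdiv (Cmult (RtoC (sqrt q ^ (k * k))) (Cpow (Cmult w w) k)) (qpoch (RtoC q) q k).
Proof.
  unfold euler_w, euler_term, euler_coef. rewrite qpoch_q_real, Cpow_mult_l, <- RtoC_pow.
  replace (sqrt q ^ (k * k)) with (sqrt q ^ (k * (k - 1)) * sqrt q ^ k)
    by (rewrite <- pow_add; f_equal; destruct k; simpl; lia).
  pose proof (qpoch_real_pos q q_bounds k).
  rewrite RtoC_div, !RtoC_mult by lra. field. RtoC_neq0.
Qed.

Lemma term_exponent_reflect m k :
  Cplus (term_exponent (m + k) k) (reflect_exponent (Cminus (RtoC 1) sigma) m) =
  Cplus (Copp (Cdiv (Cmult sigma (Cminus (RtoC 1) sigma)) (RtoC 2))) (RtoC (INR k * INR k / 2)).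
Proof.
  unfold term_exponent, jfrak_exponent, nu, reflect_exponent. rewrite plus_INR.
  rewrite !RtoC_plus, !RtoC_div, !RtoC_mult, !RtoC_minus, !RtoC_plus by lra.
  field.
Qed.

(* For [k <= n] the tail [(q^(nu+1+k);q)_oo] starts at a negative power [q^(1-sigma-m)], [m = n - k];
   reflecting its first [m] factors exposes [(q^sigma;q)_m] and the Euler term. *)
Lemma term_diag m k : term (m + k) k = Cmult (Cmult diag_const (euler_w k)) (qpoch (Q sigma) q m).
Proof.
  rewrite term_eq.
  replace (Cplus (Cplus (nu (m + k)) (RtoC 1)) (RtoC (INR k)))
    with (Cminus (Cminus (RtoC 1) sigma) (RtoC (INR m)))
    by (unfold nu; rewrite plus_INR, RtoC_plus; ring).
  rewrite (qpoch_inf_split q q_bounds _ m).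
  replace (Cmult (Q (Cminus (Cminus (RtoC 1) sigma) (RtoC (INR m)))) (RtoC (q ^ m)))
    with (Q (Cminus (RtoC 1) sigma))
    by (rewrite <- (qpow_INR q q_pos m), <- qpow_plus; f_equal; ring).
  rewrite (qpoch_reflect q q_pos).
  replace (Cminus (RtoC 1) (Cminus (RtoC 1) sigma)) with sigma by ring.
  rewrite euler_w_eq, <- (qpow_half_square q q_pos k).
  replace (sign (m + k + k)) with (Cmult (sign m) (Cmult (sign k) (sign k))) by (rewrite !sign_add; ring).
  assert (HE : Q (term_exponent (m + k) k) =
    Cdiv (Cmult (Q (Copp (Cdiv (Cmult sigma (Cminus (RtoC 1) sigma)) (RtoC 2))))
                (Q (RtoC (INR k * INR k / 2))))
         (Q (reflect_exponent (Cminus (RtoC 1) sigma) m))).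
  { rewrite <- qpow_plus, <- (term_exponent_reflect m k), qpow_plus. field. apply qpow_neq0. }
  unfold diag_const. rewrite HE, sign_sq.
  pose proof (qpoch_q_neq0 k). pose proof (qpow_neq0 q (reflect_exponent (Cminus (RtoC 1) sigma) m)).
  pose proof (sign_neq0 m). rewrite <- (sign_inv m) at 1. field. auto.
Qed.

(* Completing the square in [n - k] gives the uniform lower bound. *)
Let exponent_floor :=
  - (Re sigma - Re sigma * Re sigma + Im sigma * Im sigma) / 2 - (1 - 2 * Re sigma) * (1 - 2 * Re sigma) / 8.

Lemma Re_term_exponent_ge n k : INR k * INR k / 2 + exponent_floor <= Re (term_exponent n k).
Proof.
  assert (E : Re (term_exponent n k) =
    - (Re sigma - Re sigma * Re sigma + Im sigma * Im sigma) / 2 + INR k * INR k / 2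
    - (INR n - INR k) * (1 - Re sigma) + (INR n - INR k) * (INR n - INR k + 1) / 2).
  { unfold term_exponent, jfrak_exponent, nu. destruct sigma as [s t]. unfold Re, Im; simpl. field. }
  rewrite E. unfold exponent_floor. set (y := INR n - INR k). set (s := Re sigma).
  assert (0 <= (y + (2 * s - 1) / 2) * (y + (2 * s - 1) / 2)) by apply Rle_0_sqr. nra.
Qed.

Let const_above_diag := Rpower q exponent_floor * exp (Rpower q (1 - Re sigma) / (1 - q)).
Let const_below_diag := Cmod diag_const * exp (Cmod (Q sigma) / (1 - q)).
Let majorant k := euler_coef q k * (Cmod (Cmult (RtoC (sqrt q)) (Cmult w w)) + 1) ^ k.

Lemma Cmod_euler_w_le k : Cmod (euler_w k) <= majorant k.
Proof. apply Cmod_euler_term_le, q_bounds. Qed.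

Lemma Cmod_term_above_diag n k : (n <= k)%nat -> Cmod (term n k) <= const_above_diag * Cmod (euler_w k).
Proof.
  intros Hnk.
  assert (Hr : 0 < sqrt q ^ (k * k)) by (apply pow_lt, sqrt_lt_R0; lra).
  assert (HrC : RtoC (sqrt q ^ (k * k)) <> RtoC 0) by RtoC_neq0.
  assert (E : term n k =
    Cmult (Cmult (Cmult (sign (n + k)) (Cdiv (Q (term_exponent n k)) (RtoC (sqrt q ^ (k * k)))))
                 (qpoch_inf (Q (Cplus (Cplus (nu n) (RtoC 1)) (RtoC (INR k)))) q))
          (euler_w k)).
  { rewrite term_eq, euler_w_eq. pose proof (qpoch_q_neq0 k). field. auto. }
  rewrite E, !Cmod_mult, Cmod_div, Cmod_sign, Rmult_1_l, Cmod_qpow, Cmod_R, Rabs_right by (auto; lra).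
  apply Rmult_le_compat_r; [apply Cmod_ge_0 |].
  apply Rmult_le_compat; [apply Rdiv_le_0_compat; [apply Rlt_le, exp_pos | exact Hr] | apply Cmod_ge_0 | |].
  - apply Rmult_le_reg_r with (sqrt q ^ (k * k)); [exact Hr |].
    unfold Rdiv. rewrite Rmult_assoc, Rinv_l, Rmult_1_r by lra.
    eapply Rle_trans; [apply Rpower_le_contravar; [exact q_bounds | apply Re_term_exponent_ge] |].
    rewrite Rpower_plus.
    replace (Rpower q (INR k * INR k / 2)) with (sqrt q ^ (k * k)); [lra |].
    pose proof (qpow_half_square q q_pos k) as X. rewrite qpow_R in X by exact q_pos.
    now apply (f_equal Re) in X.
  - eapply Rle_trans; [apply Cmod_qpoch_inf_le, q_bounds |]. apply exp_le_compat.
    apply Rmult_le_compat_r; [apply Rlt_le, Rinv_0_lt_compat; lra |].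
    rewrite Cmod_qpow. apply Rpower_le_contravar; [exact q_bounds |].
    unfold nu. apply le_INR in Hnk. unfold Re; simpl. lra.
Qed.

Lemma Cmod_term_le n k : Cmod (term n k) <= (const_below_diag + const_above_diag) * majorant k.
Proof.
  assert (Hm : 0 <= majorant k) by (eapply Rle_trans; [apply Cmod_ge_0 | apply Cmod_euler_w_le]).
  assert (Hb : 0 <= const_below_diag) by (apply Rmult_le_pos; [apply Cmod_ge_0 | apply Rlt_le, exp_pos]).
  assert (Ha : 0 <= const_above_diag) by (apply Rmult_le_pos; apply Rlt_le, exp_pos).
  destruct (le_lt_dec k n) as [Hkn | Hnk].
  - replace n with ((n - k) + k)%nat by lia. rewrite term_diag, !Cmod_mult.
    apply Rle_trans with (const_below_diag * majorant k); [| nra].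
    unfold const_below_diag.
    replace (Cmod diag_const * exp (Cmod (Q sigma) / (1 - q)) * majorant k)
      with (Cmod diag_const * majorant k * exp (Cmod (Q sigma) / (1 - q))) by ring.
    apply Rmult_le_compat; auto using Rmult_le_pos, Cmod_ge_0.
    + apply Rmult_le_compat_l; [apply Cmod_ge_0 | apply Cmod_euler_w_le].
    + apply Cmod_qpoch_le, q_bounds.
  - eapply Rle_trans; [apply Cmod_term_above_diag; lia |].
    pose proof (Cmod_euler_w_le k). nra.
Qed.

Lemma ex_series_majorant : ex_series (fun k => (const_below_diag + const_above_diag) * majorant k).
Proof.
  apply (@ex_series_scal_l R_AbsRing R_NormedModule), ex_series_euler_majorant_Cmod, q_bounds.
Qed.

Lemma term_series n : is_series (term n) (cSeries (term n)).
Proof. exact (ex_series_C_le _ _ (Cmod_term_le n) ex_series_majorant). Qed.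

Lemma term_lim k :
  is_lim_Cseq (fun n => term n k) (Cmult (Cmult diag_const (euler_w k)) (qpoch_inf (Q sigma) q)).
Proof.
  apply is_lim_Cseq_incr_n with k.
  apply (is_lim_Cseq_ext (fun m => Cmult (Cmult diag_const (euler_w k)) (qpoch (Q sigma) q m))).
  - intros m. symmetry. apply term_diag.
  - apply is_lim_Cseq_mult; [apply is_lim_Cseq_const | apply qpoch_inf_correct, q_bounds].
Qed.

Lemma term_series_lim :
  is_lim_Cseq (fun n => cSeries (term n))
    (Cmult (Cmult diag_const (qpoch_inf (Q sigma) q))
           (qpoch_inf (Copp (Cmult (RtoC (sqrt q)) (Cmult w w))) q)).
Proof.
  apply (tannery_C term _ _ _ _ term_lim Cmod_term_le ex_series_majorant term_series).
  apply (is_series_ext (fun k => Cmult (Cmult diag_const (qpoch_inf (Q sigma) q)) (euler_w k))).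
  - intros k. change (Cmult (Cmult diag_const (qpoch_inf (Q sigma) q)) (euler_w k) =
      Cmult (Cmult diag_const (euler_w k)) (qpoch_inf (Q sigma) q)). ring.
  - apply is_series_Cmult_l, euler_identity, q_bounds.
Qed.

Lemma phi01_eq n : phi01 (bb n) q (zz n) = Cdiv (cSeries (term n)) (prefactor n).
Proof.
  apply cSeries_correct.
  apply (is_series_ext (fun k => Cmult (Cinv (prefactor n)) (term n k))).
  - intros k. unfold term. pose proof (prefactor_neq0 n).
    change (Cmult (Cinv (prefactor n)) (Cmult (prefactor n) (phi_term n k)) = phi_term n k). field. auto.
  - unfold Cdiv. rewrite Cmult_comm. apply is_series_Cmult_l, term_series.
Qed.

Lemma normalized_jfrak_eq (L : C) n :
  Cmult (Cmult (Cmult (csin (Cmult (RtoC PI) (nu n))) (Q (jfrak_exponent n))) (cexp (Copp (Cmult (nu n) L))))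
        (jfrak (nu n) (Cmult (RtoC 2) w) L q)
  = Cmult (Copp (csin (Cmult (RtoC PI) sigma))) (Cdiv (cSeries (term n)) (qpoch_inf (RtoC q) q)).
Proof.
  change (jfrak (nu n) (Cmult (RtoC 2) w) L q) with
    (Cmult (Cmult (Cmult (Q (jfrak_exponent n)) (Cdiv (qpoch_inf (bb n) q) (qpoch_inf (RtoC q) q)))
                  (cexp (Cmult (nu n) L)))
           (phi01 (bb n) q (zz n))).
  rewrite phi01_eq, cexp_opp.
  replace (Cmult (RtoC PI) (nu n)) with (Cminus (Copp (Cmult (RtoC PI) sigma)) (RtoC (PI * INR n)))
    by (unfold nu; rewrite RtoC_mult; ring).
  rewrite csin_sub_PI_nat, csin_opp.
  unfold prefactor.
  replace (Cmult (RtoC 2) (jfrak_exponent n)) with (Cplus (jfrak_exponent n) (jfrak_exponent n)) by ring.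
  rewrite qpow_plus.
  pose proof (cexp_neq0 (Cmult (nu n) L)). pose proof (sign_neq0 n). pose proof (qpow_neq0 q (jfrak_exponent n)).
  pose proof (qpoch_inf_bb_neq0 n). pose proof qpoch_inf_q_neq0.
  field. repeat split; auto.
Qed.
End Limit.

Theorem mainTheorem9 (q : R) (sigma w L : C) :
  0 < q < 1 ->
  w <> RtoC 0 ->
  cexp L = w ->
  (forall m : Z, qpow q sigma <> RtoC (powerRZ q m)) ->
  filterlim
    (fun n : nat =>
       let nu := Cminus (Copp sigma) (RtoC (INR n)) in
       Cmult (Cmult (Cmult (csin (Cmult (RtoC PI) nu))
                           (qpow q (Cdiv (Cmult nu (Cplus nu (RtoC 1))) (RtoC 4))))
                    (cexp (Copp (Cmult nu L))))
             (jfrak nu (Cmult (RtoC 2) w) L q))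
    eventually
    (locally
       (Cmult (Cmult (Copp (csin (Cmult (RtoC PI) sigma)))
                     (qpow q (Copp (Cdiv (Cmult sigma (Cminus (RtoC 1) sigma)) (RtoC 2)))))
              (Cdiv (Cmult (Cmult (qpoch_inf (qpow q sigma) q)
                                  (qpoch_inf (qpow q (Cminus (RtoC 1) sigma)) q))
                           (qpoch_inf (Cmult (Copp (RtoC (sqrt q))) (Cmult w w)) q))
                    (qpoch_inf (RtoC q) q)))).
Proof.
  intros Hq _ _ Hsigma.
  eapply is_lim_Cseq_ext; [intros n; symmetry; apply (normalized_jfrak_eq q sigma w Hq Hsigma L n) |].
  match goal with |- is_lim_Cseq _ ?l =>
    replace l with (Cmult (Copp (csin (Cmult (RtoC PI) sigma)))
      (Cmult (Cmult (Cmult (diag_const q sigma) (qpoch_inf (qpow q sigma) q))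
                    (qpoch_inf (Copp (Cmult (RtoC (sqrt q)) (Cmult w w))) q))
             (Cinv (qpoch_inf (RtoC q) q))))
  end.
  - apply is_lim_Cseq_mult; [apply is_lim_Cseq_const |].
    apply is_lim_Cseq_mult; [apply term_series_lim; assumption | apply is_lim_Cseq_const].
  - unfold diag_const, Cdiv.
    replace (Cmult (Copp (RtoC (sqrt q))) (Cmult w w)) with (Copp (Cmult (RtoC (sqrt q)) (Cmult w w)))
      by ring.
    ring.
Qed.
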